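(* Fix $\Sigma\in\mathcal{Q}^+_{m,n}$, indices $k,l\in\mathcal{V}_2$ with $k\ge l$, and numbers $\lambda_{hj}\ge0$ for $h,j\in\mathcal{V}_1$, $h\ge j$. Consider $$\min_{\gamma_{kl}\ge0}\ \sum_{h\ge j}\Big[\max\{\gamma_{kl},\lambda_{hj}\}q_{hk,jl}(\Sigma)-\alpha_{hk,jl}\log\max\{\lambda_{hj},\gamma_{kl}\}\Big]+\varepsilon\gamma_{kl}.$$ Let $\tilde\lambda_1<\dots<\tilde\lambda_{\tilde u_1}$ ($\tilde u_1\le m_1(m_1+1)/2$) be the distinct values among $\{\lambda_{hj}:h\ge j\}$ in increasing order, and define $\mathcal{C}_u=\{(h,j):h\ge j,\ \lambda_{hj}\le\tilde\lambda_u\}$, $\mathcal{N}_1=\{\tilde\lambda_u:u=1,\dots,\tilde u_1\}$, $\mathcal{N}_2=\{\tilde\gamma_{kl,u}:u=0,1,\dots,\tilde u_1\}$, where $\tilde\gamma_{kl,0}=0$ and, for $u>0$, $$\tilde\gamma_{kl,u}=\frac{\sum_{(h,j)\in\mathcal{C}_u}\alpha_{hk,jl}}{\sum_{(h,j)\in\mathcal{C}_u}q_{hk,jl}(\Sigma)+\varepsilon}.$$ Then this problem admits a solution and all its points of minimum lie in $\mathcal{M}_2=\mathcal{N}_1\cup\mathcal{N}_2$.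
   Context: Let $m_1,m_2,n\in\mathbb{N}$, $m=m_1m_2$, $\mathcal{V}_1=\{1,\dots,m_1\}$, $\mathcal{V}_2=\{1,\dots,m_2\}$, $\varepsilon>0$. $\mathcal{Q}^+_{m,n}$ is the set of matrix pseudo-polynomials $\Sigma(e^{i\vartheta})=S_0+\frac12\sum_{t=1}^n[S_te^{-it\vartheta}+S_t^Te^{it\vartheta}]$ ($S_0=S_0^T$, $S_t\in\mathbb{R}^{m\times m}$) with $\Sigma(e^{i\vartheta})\succ0$ for all $\vartheta\in[-\pi,\pi]$. For $M\in\mathbb{R}^{m\times m}$, $(M)_{hk,jl}$ is the entry in row $(h-1)m_2+k$ and column $(j-1)m_2+l$. $q_{hk,jl}(\Sigma)=\max_{t=0,\dots,n}\max\{|(S_t)_{hk,jl}|,|(S_t)_{hl,jk}|,|(S_t)_{jl,hk}|,|(S_t)_{jk,hl}|\}$. For $h\ge j$, $k\ge l$: $\alpha_{hk,jl}=n+1$ if $h=j,k=l$; $2n+1$ if $h=j,k>l$ or $h>j,k=l$; $4n+2$ if $h>j,k>l$. The objective is taken to be $+\infty$ if some logarithm has argument $0$. *)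

From HB Require Import structures.
From mathcomp Require Import all_boot all_order all_algebra.
From mathcomp Require Import all_classical all_reals all_analysis.
From mathcomp Require Import complex.
Set Implicit Arguments. Unset Strict Implicit. Unset Printing Implicit Defensive.
Import Order.TTheory GRing.Theory Num.Theory.
Local Open Scope ring_scope.

Section Defs.
Variables (R : realType) (m1 m2 n : nat).

(* Row/column index "hk" (0-based): (h-1) m2 + k in 1-based = h*m2 + k here *)
Lemma pidx_proof (h : 'I_m1) (k : 'I_m2) : (h * m2 + k < m1 * m2)%N.
Proof.
case: h k => h hlt [k klt] /=.
apply: (@leq_trans (h * m2 + m2)); first by rewrite ltn_add2l.
by rewrite -mulSnr leq_mul2r hlt orbT.
Qed.

Definition pidx (h : 'I_m1) (k : 'I_m2) : 'I_(m1 * m2) :=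
  Ordinal (pidx_proof h k).

(* The coefficients S_0, ..., S_n of the pseudo-polynomial Sigma *)
Definition coeffs := 'I_n.+1 -> 'M[R]_(m1 * m2).

Definition cexpi (x : R) : R[i] := (cos x +i* sin x)%C.

Definition Sigma_at (S : coeffs) (theta : R) : 'M[R[i]]_(m1 * m2) :=
  map_mx (fun x => x%:C%C) (S ord0) +
  (2%:R)^-1 *: \sum_(t < n.+1 | t != ord0)
     (cexpi (- (t%:R * theta)) *: map_mx (fun x => x%:C%C) (S t) +
      cexpi (t%:R * theta) *: map_mx (fun x => x%:C%C) (S t)^T).

Definition in_Qplus (S : coeffs) : Prop :=
  (S ord0)^T = S ord0 /\
  forall theta : R, - pi <= theta <= pi ->
    forall z : 'cV[R[i]]_(m1 * m2), z != 0 ->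
      0 < ((map_mx (@conjc R) z)^T *m Sigma_at S theta *m z) ord0 ord0.

Definition qf (S : coeffs) (h j : 'I_m1) (k l : 'I_m2) : R :=
  \big[Num.max/0]_(t < n.+1)
    Num.max (Num.max `|S t (pidx h k) (pidx j l)| `|S t (pidx h l) (pidx j k)|)
            (Num.max `|S t (pidx j l) (pidx h k)| `|S t (pidx j k) (pidx h l)|).

Definition alpha (h j : 'I_m1) (k l : 'I_m2) : R :=
  if (h == j) && (k == l) then (n + 1)%:R
  else if (h == j) || (k == l) then (2 * n + 1)%:R
  else (4 * n + 2)%:R.

Definition lowpairs :=
  seq.filter (fun p : 'I_m1 * 'I_m1 => (p.2 <= p.1)%N) (enum {: 'I_m1 * 'I_m1}).


Variables (S : coeffs) (k l : 'I_m2) (lam : 'I_m1 -> 'I_m1 -> R) (eps : R).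

Definition objective (g : R) : \bar R :=
  if has (fun p => Num.max (lam p.1 p.2) g == 0) lowpairs then +oo%E
  else ((\sum_(p <- lowpairs)
          (Num.max g (lam p.1 p.2) * qf S p.1 p.2 k l
           - alpha p.1 p.2 k l * ln (Num.max (lam p.1 p.2) g)))
        + eps * g)%:E.

Definition is_minimizer (g : R) : Prop :=
  0 <= g /\ forall g', 0 <= g' -> (objective g <= objective g')%E.

Definition lam_sorted : seq R :=
  sort <=%R (undup [seq lam p.1 p.2 | p <- lowpairs]).
Definition u1 : nat := size lam_sorted.
Definition lamt (u : nat) : R := nth 0 lam_sorted u.-1.
Definition Cset (u : nat) :=
  [seq p <- lowpairs | lam p.1 p.2 <= lamt u].
Definition gamt (u : nat) : R :=
  if u == 0%N then 0
  else (\sum_(p <- Cset u) alpha p.1 p.2 k l) /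
       (\sum_(p <- Cset u) qf S p.1 p.2 k l + eps).
Definition N1 : seq R := [seq lamt u | u <- iota 1 u1].
Definition N2 : seq R := [seq gamt u | u <- iota 0 u1.+1].
Definition M2 : seq R := N1 ++ N2.

End Defs.

(* For g >= 0 outside M2 we have g > 0 (since 0 is in N2) and g differs from
   every lam_hj.  Between the lam-values closest to g the objective equals
   B x - A ln x + K, where A and B are the sums of alpha and of q (plus eps)
   over the pairs with lam_hj < g.  This function decreases strictly up to A/B
   and increases strictly after it, and A/B is one of the gamma_kl,u.  Moving
   from g towards A/B, stopping at A/B or at the first lam_hj met, thus
   strictly lowers the objective and lands in M2.  Hence every minimiser lies
   in the finite set M2, and the best point of M2 on [0, oo) is a minimiser. *)

From HB Require Import structures.
From mathcomp Require Import all_boot all_order all_algebra.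
From mathcomp Require Import all_classical all_reals all_analysis.
From mathcomp Require Import complex.
From mathcomp Require Import lra.
Set Implicit Arguments. Unset Strict Implicit. Unset Printing Implicit Defensive.
Import Order.TTheory GRing.Theory Num.Theory.
Local Open Scope ring_scope.

Section TotalOrder.
Variables (d : Order.disp_t) (T : orderType d).

Lemma nearest_below (s : seq T) (x0 g : T) : (x0 < g)%O ->
  exists a, [/\ a \in x0 :: s, (x0 <= a)%O, (a < g)%O &
                forall y, y \in s -> (y < g)%O -> (y <= a)%O].
Proof.
move=> x0g; elim: s => [|y s [a [aS x0a ag amax]]].
  by exists x0; rewrite mem_head lexx.
have [yg|gy] := ltP y g; last first.
  exists a; split=> // [|z].
    by move: aS; rewrite !inE => /orP[->|->]; rewrite ?orbT.
  by rewrite inE => /orP[/eqP->|/amax//]; rewrite ltNge gy.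
have [ay|ya] := leP a y.
  exists y; split=> //; first by rewrite !inE eqxx orbT.
  - exact: le_trans ay.
  - by move=> z; rewrite inE => /orP[/eqP->//|zs /(amax _ zs)/le_trans]; apply.
exists a; split=> //; first by move: aS; rewrite !inE => /orP[->|->]; rewrite ?orbT.
by move=> z; rewrite inE => /orP[/eqP->|/amax//]; rewrite ltW.
Qed.

Lemma seq_argmin (U : eqType) (F : U -> T) (s : seq U) x0 : x0 \in s ->
  exists2 c, c \in s & forall x, x \in s -> (F c <= F x)%O.
Proof.
elim: s x0 => // y [|z t] IH x0 _.
  by exists y; rewrite ?mem_head // => x /[!inE] /eqP->.
have [c ct cmin] := IH z (mem_head z t).
have [Fyc|Fcy] := leP (F y) (F c).
  exists y => [|x]; first exact: mem_head.
  by rewrite inE => /orP[/eqP->//|/cmin]; apply: le_trans.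
exists c => [|x]; first by rewrite inE ct orbT.
by rewrite inE => /orP[/eqP->|/cmin//]; rewrite ltW.
Qed.

Lemma argmin_descent (U : eqType) (F : U -> T) (D : pred U) (s : seq U) x0 :
  x0 \in s -> D x0 ->
  (forall x, D x -> x \notin s -> exists2 y, y \in s & D y /\ (F y < F x)%O) ->
  (exists2 c, D c & forall x, D x -> (F c <= F x)%O) /\
  (forall c, D c -> (forall x, D x -> (F c <= F x)%O) -> c \in s).
Proof.
move=> x0s Dx0 descent; split; last first.
  move=> c Dc cmin; apply/negPn/negP => /(descent c Dc)[y _ [Dy]].
  by rewrite ltNge cmin.
have [|c] := @seq_argmin _ F [seq x <- s | D x] x0; first by rewrite mem_filter Dx0.
rewrite mem_filter => /andP[Dc cs] cmin; exists c => // x Dx.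
have [xs|/(descent x Dx)[y ys [Dy Fyx]]] := boolP (x \in s).
  by apply: cmin; rewrite mem_filter Dx.
by apply: le_trans (ltW Fyx); apply: cmin; rewrite mem_filter Dy.
Qed.

End TotalOrder.

Lemma nearest_above (d : Order.disp_t) (T : orderType d) (s : seq T) (x0 g : T) :
  (g < x0)%O ->
  exists a, [/\ a \in x0 :: s, (a <= x0)%O, (g < a)%O &
                forall y, y \in s -> (g < y)%O -> (a <= y)%O].
Proof. exact: (@nearest_below _ T^d). Qed.

Section LinLog.
Variable R : realType.

Lemma ln_lt_subr1 (t : R) : 0 < t -> t != 1 -> ln t < t - 1.
Proof.
move=> t_gt0 t_neq1; have := @expR_gt1Dx R (ln t).
by rewrite ln_eq0 // t_neq1 lnK ?posrE // => /(_ isT); lra.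
Qed.

Lemma ln_sub_lt (x y : R) : 0 < x -> 0 < y -> x != y ->
  (ln y - ln x) * x < y - x.
Proof.
move=> x_gt0 y_gt0 xy; rewrite -ln_div ?posrE // -ltr_pdivlMr //.
rewrite mulrBl divff ?lt0r_neq0 //; apply: ln_lt_subr1; first exact: divr_gt0.
by apply: contraNneq xy => /divr1_eq ->.
Qed.

Definition linlog (A B x : R) := B * x - A * ln x.

Lemma linlog_increasing (A B x y : R) :
  0 <= A -> 0 < B -> A / B <= x -> x < y -> linlog A B x < linlog A B y.
Proof.
move=> A_ge0 B_gt0 ABx xy; rewrite /linlog.
have [->|A_gt0] := eqVneq A 0; first by rewrite !mul0r !subr0 ltr_pM2l.
have {A_gt0}A_gt0 : 0 < A by rewrite lt_def A_gt0.
have x_gt0 : 0 < x by apply: lt_le_trans ABx; rewrite divr_gt0.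
have := ln_sub_lt x_gt0 (lt_trans x_gt0 xy) (negbT (lt_eqF xy)).
have : A <= B * x by rewrite mulrC -ler_pdivrMr.
nra.
Qed.

Lemma linlog_decreasing (A B x y : R) :
  0 < B -> 0 < x -> x < y -> y <= A / B -> linlog A B y < linlog A B x.
Proof.
move=> B_gt0 x_gt0 xy yAB; rewrite /linlog.
have y_gt0 := lt_trans x_gt0 xy.
have ByA : B * y <= A by rewrite mulrC -ler_pdivlMr.
have A_gt0 : 0 < A by apply: lt_le_trans ByA; rewrite mulr_gt0.
suff : A * (ln x - ln y) * y < B * (x - y) * y by rewrite ltr_pM2r //; lra.
have := ln_sub_lt y_gt0 x_gt0 (negbT (gt_eqF xy)).
nra.
Qed.

End LinLog.

Lemma alpha_gt0 (R : realType) n m1 m2 (h j : 'I_m1) (k l : 'I_m2) :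
  0 < alpha R n h j k l.
Proof. by rewrite /alpha; do 2?case: ifP => _; rewrite ltr0n ?addn1 ?addn2. Qed.

Lemma qf_ge0 (R : realType) m1 m2 n (S : coeffs R m1 m2 n) h j k l :
  0 <= qf S h j k l.
Proof. by rewrite /qf; elim/big_ind: _ => // x y; rewrite le_max => ->. Qed.

Section Objective.
Variables (R : realType) (m1 m2 n : nat) (S : coeffs R m1 m2 n) (k l : 'I_m2).
Variables (lam : 'I_m1 -> 'I_m1 -> R) (eps : R).
Hypothesis eps_gt0 : 0 < eps.

Local Notation s := (lowpairs m1).
Local Notation lp p := (lam p.1 p.2).
Local Notation qq p := (qf S p.1 p.2 k l).
Local Notation al p := (alpha R n p.1 p.2 k l).
Local Notation f := (objective S k l lam eps).
Local Notation M2 := (M2 S k l lam eps).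

Definition cell_A (g : R) := \sum_(p <- s | lp p < g) al p.
Definition cell_B (g : R) := \sum_(p <- s | lp p < g) qq p + eps.
Definition cell_K (g : R) :=
  \sum_(p <- s | ~~ (lp p < g)) (lp p * qq p - al p * ln (lp p)).
Definition cell_crit (g : R) := cell_A g / cell_B g.

Lemma cell_A_gt0 g : has (fun p => lp p < g) s -> 0 < cell_A g.
Proof.
move=> below; have al_ge0 (p : 'I_m1 * 'I_m1) : 0 <= al p by exact/ltW/alpha_gt0.
rewrite lt_def psumr_neq0 ?sumr_ge0 //.
by rewrite andbT; move: below; apply: sub_has => p /= ->; rewrite alpha_gt0.
Qed.

Lemma cell_B_gt0 g : 0 < cell_B g.
Proof. by apply: ltr_wpDl => //; apply: sumr_ge0 => p _; apply: qf_ge0. Qed.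

Lemma objective_on_cell g x : 0 < g ->
  (forall p, p \in s -> lp p < g -> lp p <= x) ->
  (forall p, p \in s -> g <= lp p -> x <= lp p) ->
  (has (fun p => lp p < g) s -> 0 < x) ->
  f x = (linlog (cell_A g) (cell_B g) x + cell_K g)%:E.
Proof.
move=> g_gt0 below_x above_x x_gt0.
have max_below p : p \in s -> lp p < g -> Num.max (lp p) x = x.
  by move=> ps lpg; rewrite max_r ?below_x.
have max_above p : p \in s -> ~~ (lp p < g) -> Num.max (lp p) x = lp p.
  by rewrite -leNgt => ps glp; rewrite max_l ?above_x.
rewrite /objective; case: hasP => [[p ps]|_].
  suff max_gt0 : 0 < Num.max (lp p) x by rewrite gt_eqF.
  have [lpg|glp] := ltP (lp p) g.
    by rewrite max_below // x_gt0 //; apply/hasP; exists p.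
  by rewrite max_above -?leNgt // (lt_le_trans g_gt0).
congr EFin; rewrite (bigID (fun p => lp p < g)) /=.
rewrite [X in X + _ + _]big_seq_cond [X in _ + X + _]big_seq_cond.
rewrite (eq_bigr (fun p => x * qq p - al p * ln x)); last first.
  by move=> p /andP[ps lpg]; rewrite maxC max_below.
rewrite [X in _ + X + _](eq_bigr (fun p => lp p * qq p - al p * ln (lp p))).
  rewrite -!big_seq_cond big_split /= sumrN -mulr_sumr -mulr_suml.
  by rewrite /linlog /cell_A /cell_B /cell_K; lra.
by move=> p /andP[ps glp]; rewrite maxC max_above.
Qed.

Lemma mem_lam_sorted p : p \in s -> lp p \in lam_sorted lam.
Proof.
by move=> ps; rewrite mem_sort mem_undup; apply: (map_f (fun p => lp p)).
Qed.

Lemma lam_in_M2 p : p \in s -> lp p \in M2.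
Proof.
move=> ps; rewrite mem_cat; apply/orP; left; apply/mapP.
exists (index (lp p) (lam_sorted lam)).+1.
  by rewrite mem_iota /= add1n ltnS index_mem mem_lam_sorted.
by rewrite /lamt /= nth_index ?mem_lam_sorted.
Qed.

Lemma zero_in_M2 : 0 \in M2.
Proof.
by rewrite mem_cat; apply/orP; right; apply/mapP; exists 0%N; rewrite ?mem_iota.
Qed.

Lemma cell_crit_in_M2 g : cell_crit g \in M2.
Proof.
rewrite mem_cat; apply/orP; right; apply/mapP.
have [/hasP[p0 p0s p0g]|none_below] := boolP (has (fun p => lp p < g) s); last first.
  by exists 0%N; rewrite ?mem_iota // /gamt /cell_crit /cell_A big_hasC ?mul0r.
have [a [aS _ ag amax]] := nearest_below [seq lp p | p <- s] p0g.
have [q qs def_a] : exists2 q, q \in s & a = lp q.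
  by move: aS; rewrite inE => /orP[/eqP->|/mapP[q]]; [exists p0 | exists q].
exists (index a (lam_sorted lam)).+1.
  by rewrite mem_iota add0n ltnS index_mem def_a mem_lam_sorted.
rewrite /gamt /= /Cset /lamt /= nth_index ?def_a ?mem_lam_sorted // -def_a.
have -> : [seq p <- s | lp p <= a] = [seq p <- s | lp p < g].
  apply: eq_in_filter => p ps; apply/idP/idP => [/le_lt_trans->//|].
  by apply: amax; apply: map_f.
by rewrite !big_filter.
Qed.

Lemma cell_crit_ge0 g : 0 <= cell_crit g.
Proof.
rewrite divr_ge0 ?sumr_ge0 // => [p _|]; first exact/ltW/alpha_gt0.
exact/ltW/cell_B_gt0.
Qed.

Section Descent.
Variable g : R.
Hypotheses (g_ge0 : 0 <= g) (g_notin_M2 : g \notin M2).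

Let g_gt0 : 0 < g.
Proof.
rewrite lt_def g_ge0 andbT.
by apply: contraNneq g_notin_M2 => ->; apply: zero_in_M2.
Qed.

Let lam_neq_g p : p \in s -> lp p != g.
Proof. by move=> ps; apply: contraNneq g_notin_M2 => <-; apply: lam_in_M2. Qed.

Let candidate_in_M2 x : x \in cell_crit g :: [seq lp p | p <- s] -> x \in M2.
Proof.
rewrite inE => /orP[/eqP->|/mapP[p ps ->]]; first exact: cell_crit_in_M2.
exact: lam_in_M2.
Qed.

Let objective_g : f g = (linlog (cell_A g) (cell_B g) g + cell_K g)%:E.
Proof. by apply: objective_on_cell => // p _; apply: ltW. Qed.

Lemma descent_above_crit : cell_crit g < g ->
  exists2 c, c \in M2 & 0 <= c /\ (f c < f g)%E.
Proof.
move=> crit_g.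
have [a [aS crit_a ag amax]] := nearest_below [seq lp p | p <- s] crit_g.
exists a; first exact: candidate_in_M2.
split; first exact: le_trans (cell_crit_ge0 g) crit_a.
have below_a p : p \in s -> lp p < g -> lp p <= a by move=> ps; apply/amax/map_f.
have above_a p : p \in s -> g <= lp p -> a <= lp p by move=> _; apply/le_trans/ltW.
have a_gt0 : has (fun p => lp p < g) s -> 0 < a.
  by move/cell_A_gt0 => A_gt0; apply: lt_le_trans crit_a; rewrite divr_gt0 ?cell_B_gt0.
rewrite objective_g (objective_on_cell g_gt0 below_a above_a a_gt0) lte_fin ltrD2r.
apply: linlog_increasing (cell_B_gt0 g) crit_a ag.
by rewrite sumr_ge0 // => p _; apply/ltW/alpha_gt0.
Qed.

Lemma descent_below_crit : g < cell_crit g ->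
  exists2 c, c \in M2 & 0 <= c /\ (f c < f g)%E.
Proof.
move=> g_crit.
have [b [bS b_crit gb bmin]] := nearest_above [seq lp p | p <- s] g_crit.
exists b; first exact: candidate_in_M2.
split; first exact: le_trans g_ge0 (ltW gb).
have below_b p : p \in s -> lp p < g -> lp p <= b by move=> _ /lt_trans/(_ gb)/ltW.
have above_b p : p \in s -> g <= lp p -> b <= lp p.
  by move=> ps glp; apply: bmin; [apply: map_f | rewrite lt_def lam_neq_g].
rewrite objective_g (objective_on_cell g_gt0 below_b above_b) ?lte_fin ?ltrD2r.
  exact: linlog_decreasing (cell_B_gt0 g) g_gt0 gb b_crit.
by move=> _; apply: lt_trans gb.
Qed.

End Descent.

Lemma objective_descent g : 0 <= g -> g \notin M2 ->
  exists2 c, c \in M2 & 0 <= c /\ (f c < f g)%E.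
Proof.
move=> g_ge0 g_notin_M2; case: (ltgtP (cell_crit g) g).
- exact: descent_above_crit.
- exact: descent_below_crit.
- by move=> crit_g; move: g_notin_M2; rewrite -crit_g cell_crit_in_M2.
Qed.

End Objective.

Theorem proposition6 (R : realType) (m1 m2 n : nat)
    (S : coeffs R m1 m2 n) (hS : in_Qplus S)
    (k l : 'I_m2) (hkl : (l <= k)%N)
    (lam : 'I_m1 -> 'I_m1 -> R)
    (hlam : forall h j : 'I_m1, (j <= h)%N -> 0 <= lam h j)
    (eps : R) (heps : 0 < eps) :
  (exists g : R, is_minimizer S k l lam eps g) /\
  (forall g : R, is_minimizer S k l lam eps g -> g \in M2 S k l lam eps).
Proof.
have [[g g_ge0 g_min] minimizers_in_M2] :=
  argmin_descent (F := objective S k l lam eps) (D := fun x => 0 <= x)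
    (zero_in_M2 S k l lam eps) (lexx 0) (objective_descent heps).
by split; [exists g | move=> c []; apply: minimizers_in_M2].
Qed.
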